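(* For every $E\subseteq\mathbb{F}_q^2$, $\Psi(2,2)\le\Psi(3,1)$.
   Context: $O(\mathbb{F}_q^2)$ is the group of $2\times2$ matrices $\theta$ over $\mathbb{F}_q$ ($q$ odd) with $\theta^T\theta=I$. $\lambda_\theta(w)=|\{(u,v)\in E^2: u-\theta v=w\}|$. For positive integers $a,b$, $$\Psi(a,b)=\sum_{x,x'\in\mathbb{F}_q^2}\ \sum_{\theta,\phi\in O(\mathbb{F}_q^2)}\lambda_\theta(x-\theta x')^a\,\lambda_\phi(x-\phi x')^b.$$ *)

From mathcomp Require Import all_boot all_algebra all_field.
Set Implicit Arguments. Unset Strict Implicit. Unset Printing Implicit Defensive.
Import GRing.Theory.
Local Open Scope ring_scope.

Definition orth2 (F : finFieldType) : {set 'M[F]_2} :=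
  [set th : 'M[F]_2 | th^T *m th == 1%:M].

Definition lam (F : finFieldType) (E : {set 'cV[F]_2}) (th : 'M[F]_2)
  (w : 'cV[F]_2) : nat :=
  #|[set uv : 'cV[F]_2 * 'cV[F]_2 |
      [&& uv.1 \in E, uv.2 \in E & uv.1 - th *m uv.2 == w]]|.

Definition Psi (F : finFieldType) (E : {set 'cV[F]_2}) (a b : nat) : nat :=
  \sum_(x : 'cV[F]_2) \sum_(x' : 'cV[F]_2)
    \sum_(th in orth2 F) \sum_(ph in orth2 F)
      (lam E th (x - th *m x') ^ a * lam E ph (x - ph *m x') ^ b)%N.

From mathcomp Require Import all_boot all_algebra all_field.
From mathcomp Require Import zify.

(* For fixed x, x' put f(theta) := lambda_theta(x - theta x'); then the claim is
   (sum_theta f^2)^2 <= (sum_theta f^3)(sum_theta f), which follows by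
   symmetrising the double sum and applying 2 a^2 b^2 <= a^3 b + b^3 a termwise.
   Nothing about finite fields, orthogonal matrices or odd q is needed. *)

Lemma leq_sqr_mul_cube_mul (a b : nat) :
  (2 * (a ^ 2 * b ^ 2) <= a ^ 3 * b + b ^ 3 * a)%N.
Proof.
wlog le_ab : a b / (a <= b)%N.
  by move=> hwlog; have [/hwlog|/ltnW/hwlog] := leqP a b; lia.
have [c ->] : exists c, b = a + c by exists (b - a); lia.
nia.
Qed.

Lemma sum_sqr_mul_sqr_le {I : Type} (r : seq I) (P : pred I) (f : I -> nat) :
  (\sum_(i <- r | P i) \sum_(j <- r | P j) (f i ^ 2 * f j ^ 2)
   <= \sum_(i <- r | P i) \sum_(j <- r | P j) (f i ^ 3 * f j))%N.
Proof.
set S3 := (X in (_ <= X)%N).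
have sym : (S3 + S3 = \sum_(i <- r | P i) \sum_(j <- r | P j)
                        (f i ^ 3 * f j + f j ^ 3 * f i))%N.
  rewrite [X in (_ + X)%N]exchange_big -big_split /=.
  by apply: eq_bigr => i _; rewrite big_split.
rewrite -(leq_pmul2l (isT : 0 < 2)%N) [X in (_ <= X)%N]mul2n -addnn sym.
rewrite big_distrr /=.
apply: leq_sum => i _; rewrite big_distrr /=; apply: leq_sum => j _.
exact: leq_sqr_mul_cube_mul.
Qed.

Theorem lemma3p2 (F : finFieldType) (hodd : odd #|F|) (E : {set 'cV[F]_2}) :
  (Psi E 2 2 <= Psi E 3 1)%N.
Proof.
apply: leq_sum => x _; apply: leq_sum => x' _.
apply: (leq_trans (sum_sqr_mul_sqr_le _ _ (fun th => lam E th (x - th *m x')%R))).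
apply/eq_leq/eq_bigr => th _; by apply: eq_bigr => ph _; rewrite expn1.
Qed.
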